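(* Let $Z_h$ be a $(\beta,M)$-scale free hashing-based estimator with $\beta\in[\tfrac12,1]$ and $M\ge 1$. Let $x$ be a query with $\mu=\mu(x)>0$, let $\tau\in[\mu,1]$ and $\gamma\in[0,1]$, and suppose $x$ is $(\tau,\gamma)$-localized. Then $$\mathbb{E}[Z_h^2]\le \mu^2\cdot M^3\left\{2\tau^{\beta}+\gamma^{2-\beta}+\tau^{2\beta-1}\gamma^{\beta}\right\}\mu^{-\beta}.$$
   Context: Let $P=\{x_1,\dots,x_n\}\subset\mathbb{R}^d$ be a dataset and $x\in\mathbb{R}^d$ a query. Each data point has a nonnegative weight $w_i=w_i(x)$ (e.g. $w_i(x)=k(x,x_i)$ for a kernel $k$), and $\mu=\mu(x)=\frac1n\sum_{i=1}^n w_i(x)$. Given a family $\mathcal{H}$ of hash functions on $\mathbb{R}^d$ with a probability distribution $\nu$, sample $h\sim\nu$ and let $H(x)=\{i\in[n]:h(x_i)=h(x)\}$; let $I(x)$ be a uniformly random element of $H(x)$, or $\perp$ if $H(x)$ is empty; let $p_i=p_i(x)=\Pr_{h\sim\nu}[i\in H(x)]$, with the conventions $p_\perp=1$, $w_\perp=0$. The hashing-based estimator (HBE) is $Z_h=Z_h(x)=\frac{w_{I(x)}}{p_{I(x)}}\cdot\frac{|H(x)|}{n}$. The HBE is $(\beta,M)$-scale free (for $\beta\in(0,1]$, $M\ge1$) if $M^{-1}w_i(x)^\beta\le p_i(x)\le M\,w_i(x)^\beta$ for all $i\in[n]$ and all queries $x$. For $\tau\in[\mu,1]$ let $B_{\tau,\mu}(x)=\{i\in[n]: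 w_i\ge \mu/\tau\}$; for $\gamma\in[0,1]$ the query $x$ is $(\tau,\gamma)$-localized if $\sum_{i\in B_{\tau,\mu}(x)}w_i\ge(1-\gamma)\sum_{i=1}^n w_i$. *)

From HB Require Import structures.
From mathcomp Require Import all_boot all_order all_algebra.
From mathcomp Require Import all_classical all_reals all_analysis.
Set Implicit Arguments. Unset Strict Implicit. Unset Printing Implicit Defensive.
Import Order.TTheory GRing.Theory Num.Theory.
Local Open Scope ring_scope.
Local Open Scope classical_set_scope.

Section HBE.
Context {R : realType} {dd : nat} {n : nat} {U : eqType}.
Context {d0 : measure_display} {T : measurableType d0}.

(* A random hash function: omega |-> hash omega : R^dd -> U, omega ~ P (= nu). *)

Definition Hset (h : 'rV[R]_dd -> U) (xs : 'I_n -> 'rV[R]_dd) (x : 'rV[R]_dd)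
  : {set 'I_n} := [set i | h (xs i) == h x].

Definition collide_event (hash : T -> 'rV[R]_dd -> U) (xs : 'I_n -> 'rV[R]_dd)
  (x : 'rV[R]_dd) (i : 'I_n) : set T := [set om | hash om (xs i) == hash om x].

Definition coll_prob (P : probability T R) (hash : T -> 'rV[R]_dd -> U)
  (xs : 'I_n -> 'rV[R]_dd) (x : 'rV[R]_dd) (i : 'I_n) : R :=
  fine (P (collide_event hash xs x i)).

Definition mu_of (w : 'rV[R]_dd -> 'I_n -> R) (x : 'rV[R]_dd) : R :=
  n%:R^-1 * \sum_(i < n) w x i.

(* Value of the HBE Z_h for hash h and sampled index I (None = bottom,
   with w_bot = 0, p_bot = 1). *)
Definition Zval (w : 'rV[R]_dd -> 'I_n -> R) (p : 'rV[R]_dd -> 'I_n -> R)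
  (h : 'rV[R]_dd -> U) (xs : 'I_n -> 'rV[R]_dd) (x : 'rV[R]_dd)
  (I : option 'I_n) : R :=
  match I with
  | None => 0
  | Some i => w x i / p x i * (#|Hset h xs x|%:R / n%:R)
  end.

(* E[Z_h^2 | h] : I uniform on H(x) (I = bottom, Z = 0, if H(x) is empty) *)
Definition Zsq_given_h (w p : 'rV[R]_dd -> 'I_n -> R) (h : 'rV[R]_dd -> U)
  (xs : 'I_n -> 'rV[R]_dd) (x : 'rV[R]_dd) : R :=
  if #|Hset h xs x| == 0%N then (Zval w p h xs x None) ^+ 2
  else \sum_(i in Hset h xs x) #|Hset h xs x|%:R^-1 * (Zval w p h xs x (Some i)) ^+ 2.

Definition HBE_second_moment (P : probability T R) (hash : T -> 'rV[R]_dd -> U)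
  (w : 'rV[R]_dd -> 'I_n -> R) (xs : 'I_n -> 'rV[R]_dd) (x : 'rV[R]_dd) : \bar R :=
  (\int[P]_om (Zsq_given_h w (coll_prob P hash xs) (hash om) xs x)%:E)%E.

Definition scale_free (beta M : R) (w p : 'rV[R]_dd -> 'I_n -> R) : Prop :=
  forall (x : 'rV[R]_dd) (i : 'I_n),
    M^-1 * (w x i `^ beta) <= p x i /\ p x i <= M * (w x i `^ beta).

Definition Bset (w : 'rV[R]_dd -> 'I_n -> R) (x : 'rV[R]_dd) (tau : R) : {set 'I_n} :=
  [set i | mu_of w x / tau <= w x i].

Definition localized (w : 'rV[R]_dd -> 'I_n -> R) (x : 'rV[R]_dd) (tau gamma : R) : Prop :=
  (1 - gamma) * \sum_(i < n) w x i <= \sum_(i in Bset w x tau) w x i.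

End HBE.

From HB Require Import structures.
From mathcomp Require Import all_boot all_order all_algebra.
From mathcomp Require Import all_classical all_reals all_analysis.
From mathcomp Require Import measurable_realfun ring lra.
Set Implicit Arguments. Unset Strict Implicit. Unset Printing Implicit Defensive.
Import Order.TTheory GRing.Theory Num.Theory.
Local Open Scope ring_scope.
Local Open Scope classical_set_scope.

(* Given h, E[Z^2 | h] = n^-2 sum_{i,j in H(x)} (w_i/p_i)^2, hence
   E[Z^2] = n^-2 sum_{i,j} (w_i/p_i)^2 Pr[i, j in H(x)]
         <= n^-2 sum_{i,j} (w_i/p_i)^2 min(p_i, p_j).
   Scale-freeness bounds each term both by M^3 w_i w_j^(1-beta) (this needs
   beta >= 1/2) and by M^3 w_i^(2-2beta) w_j^beta.  The first bound is used for
   j in B, where w_j >= mu/tau, the second for j outside B, which carries total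
   weight at most gamma n mu by localization; the power sums over the
   complement of B are controlled by concavity of t |-> t^q for q <= 1. *)

Section powR_inequalities.
Variable R : realType.
Implicit Types a x y q r s mu tau gamma beta : R.

Lemma gt0_powRD x r s : 0 < x -> x `^ (r + s) = x `^ r * x `^ s.
Proof. by move=> x_gt0; rewrite powRD // lt0r_neq0 // implybT. Qed.

Lemma powR_tangent_le x y q : 0 <= x -> 0 < y -> 0 <= q <= 1 ->
  x `^ q <= y `^ (q - 1) * (q * x + (1 - q) * y).
Proof.
move=> x_ge0 y_gt0 /andP[q_ge0 q_le1].
have [->|q_neq0] := eqVneq q 0.
  rewrite powRr0 sub0r powRN powRr1 ?(ltW y_gt0) // subr0 mul0r mul1r add0r.
  by rewrite mulVf ?gt_eqF.
have [->|q_neq1] := eqVneq q 1.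
  by rewrite subrr powRr0 powRr1 // mul0r addr0 !mul1r.
have q_gt0 : 0 < q by rewrite lt_neqAle eq_sym q_neq0.
have q1_gt0 : 0 < 1 - q by rewrite subr_gt0 lt_neqAle q_neq1.
have young : x `^ q * y `^ (1 - q) <= q * x + (1 - q) * y.
  have := @conjugate_powR R (x `^ q) (y `^ (1 - q)) q^-1 (1 - q)^-1
    (powR_ge0 _ _) (powR_ge0 _ _).
  rewrite !invr_gt0 q_gt0 q1_gt0 !invrK addrC subrK -!powRrM.
  rewrite !mulfV ?gt_eqF // powRr1 // powRr1 ?(ltW y_gt0) //.
  by move=> /(_ isT isT erefl); rewrite (mulrC q) (mulrC (1 - q)).
have -> : x `^ q = x `^ q * y `^ (1 - q) * y `^ (q - 1).
  by rewrite -mulrA -gt0_powRD // addrA subrK subrr powRr0 mulr1.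
by rewrite mulrC ler_wpM2l ?powR_ge0.
Qed.

Lemma sum_powR_le_mean (I : finType) (A : {pred I}) (W : I -> R) q :
  (forall i, 0 <= W i) -> 0 <= q <= 1 ->
  \sum_(i in A) W i `^ q <= #|I|%:R * ((\sum_(i in A) W i) / #|I|%:R) `^ q.
Proof.
move=> W_ge0 q01; set s := \sum_(i in A) W i; set N : R := #|I|%:R.
have A_le_N : #|A|%:R <= N by rewrite ler_nat max_card.
have [s0|s_neq0] := eqVneq s 0.
  have W0 := psumr_eq0P (fun i _ => W_ge0 i) s0.
  rewrite s0 mul0r (eq_bigr (fun=> 0 `^ q)) => [|i /W0 ->//].
  by rewrite sumr_const -mulr_natl ler_wpM2r ?powR_ge0.
have N_gt0 : 0 < N.
  move: s_neq0; rewrite psumr_neq0 // => /hasP[i _ _].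
  by rewrite ltr0n; apply/card_gt0P; exists i.
have s_gt0 : 0 < s by rewrite lt_neqAle eq_sym s_neq0 sumr_ge0.
(* Tangent line of t^q at y = s / #|I|, summed over A. *)
set y := s / N; have y_gt0 : 0 < y by rewrite divr_gt0.
have yN : y * N = s by rewrite divfK ?gt_eqF.
apply: (le_trans (y := \sum_(i in A) y `^ (q - 1) * (q * W i + (1 - q) * y))).
  by apply: ler_sum => i _; apply: powR_tangent_le.
rewrite -mulr_sumr big_split /= -mulr_sumr -/s sumr_const -mulr_natr.
have [q_ge0 q_le1] := andP q01.
apply: (le_trans (y := y `^ (q - 1) * (q * s + (1 - q) * (y * N)))).
  rewrite ler_wpM2l ?powR_ge0 // lerD2l -mulrA ler_wpM2l ?subr_ge0 //.
  by rewrite ler_wpM2l // ltW.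
rewrite yN -mulrDl subrKC mul1r -yN mulrA -{2}(powRr1 (ltW y_gt0)).
by rewrite -gt0_powRD // subrK mulrC.
Qed.

Lemma powR1B_le a mu tau r : 0 < mu -> 0 < tau -> mu / tau <= a -> 0 <= r ->
  a `^ (1 - r) <= a * (tau `^ r * mu `^ (- r)).
Proof.
move=> mu_gt0 tau_gt0 mu_tau_le r_ge0.
have a_gt0 : 0 < a by apply: lt_le_trans mu_tau_le; rewrite divr_gt0.
have mu_le : mu `^ r <= tau `^ r * a `^ r.
  rewrite -powRM ?(ltW tau_gt0) ?(ltW a_gt0) //.
  apply: (ge0_ler_powR r_ge0); rewrite ?nnegrE ?(ltW mu_gt0) //.
    by rewrite mulr_ge0 ?(ltW tau_gt0) ?(ltW a_gt0).
  by rewrite mulrC -ler_pdivrMr.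
have [ar_gt0 tr_gt0] := (powR_gt0 r a_gt0, powR_gt0 r tau_gt0).
rewrite gt0_powRD // powRr1 ?(ltW a_gt0) // ler_wpM2l ?(ltW a_gt0) // !powRN.
have -> : (a `^ r)^-1 = tau `^ r * (tau `^ r * a `^ r)^-1.
  by rewrite invfM mulrA mulfV ?gt_eqF ?mul1r.
by rewrite ler_wpM2l ?(ltW tr_gt0) // lef_pV2 ?posrE ?mulr_gt0 ?powR_gt0.
Qed.

Lemma second_moment_termsE mu tau gamma beta : 0 < mu -> 0 <= gamma -> beta <= 1 ->
  mu ^+ 2 * (tau `^ beta * mu `^ (- beta)) +
    (mu * (tau `^ (2 * beta - 1) * mu `^ (- (2 * beta - 1))) +
     (gamma * mu) `^ (2 - 2 * beta)) * (gamma * mu) `^ beta =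
  mu ^+ 2 * (tau `^ beta + gamma `^ (2 - beta) + tau `^ (2 * beta - 1) * gamma `^ beta)
    * mu `^ (- beta).
Proof.
move=> mu_gt0 gamma_ge0 beta_le1; have mub_gt0 := powR_gt0 beta mu_gt0.
have e1 : mu `^ (- (2 * beta - 1)) = mu / mu `^ beta ^+ 2.
  rewrite (_ : - (2 * beta - 1) = 1 + - (beta + beta)); last by ring.
  by rewrite !gt0_powRD // powRr1 ?ltW // powRN gt0_powRD.
have e2 : mu `^ (2 - 2 * beta) = mu ^+ 2 / mu `^ beta ^+ 2.
  rewrite (_ : 2 - 2 * beta = 2%:R + - (beta + beta)); last by ring.
  by rewrite gt0_powRD // powR_mulrn ?(ltW mu_gt0) // powRN gt0_powRD.
have e3 : gamma `^ (2 - beta) = gamma `^ (2 - 2 * beta) * gamma `^ beta.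
  rewrite -powRD; first by f_equal; ring.
  by rewrite (_ : _ + _ == 0 = false) // gt_eqF //; lra.
rewrite !powRM ?(ltW mu_gt0) // e1 e2 e3 powRN.
by field; rewrite gt_eqF.
Qed.

End powR_inequalities.

Section scale_free_pair.
Variables (R : realType) (beta M : R).
Hypothesis M_gt0 : 0 < M.
Implicit Types a b pa pb : R.

Lemma scale_free_ratio_le a pa : 0 <= a -> M^-1 * a `^ beta <= pa ->
  a / pa <= M * a `^ (1 - beta).
Proof.
rewrite le_eqVlt => /predU1P[<-|a_gt0] pa_ge.
  by rewrite mul0r mulr_ge0 ?powR_ge0 ?ltW.
have pa_gt0 : 0 < pa.
  by apply: lt_le_trans pa_ge; rewrite mulr_gt0 ?invr_gt0 ?powR_gt0.
rewrite ler_pdivrMr //; apply: le_trans (ler_wpM2l _ pa_ge); last first.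
  by rewrite mulr_ge0 ?powR_ge0 ?ltW.
by rewrite mulrACA mulfV ?gt_eqF // mul1r -gt0_powRD // subrK powRr1 // ltW.
Qed.

Lemma scale_free_sq_ratio_le a pa : 0 <= a -> M^-1 * a `^ beta <= pa ->
  (a / pa) ^+ 2 <= M ^+ 2 * a `^ (2 - 2 * beta).
Proof.
move=> a_ge0 pa_ge.
have a_pa_ge0 : 0 <= a / pa.
  by rewrite divr_ge0 // (le_trans _ pa_ge) ?mulr_ge0 ?invr_ge0 ?powR_ge0 ?ltW.
have -> : 2 - 2 * beta = (1 - beta) * 2%:R by ring.
rewrite powRrM powR_mulrn ?powR_ge0 // -exprMn.
by rewrite lerXn2r ?nnegrE ?scale_free_ratio_le // mulr_ge0 ?powR_ge0 // ltW.
Qed.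

Lemma sq_ratio_min_le_powR a b pa pb : 0 <= a ->
  M^-1 * a `^ beta <= pa -> pb <= M * b `^ beta ->
  (a / pa) ^+ 2 * Num.min pa pb <= M ^+ 3 * (a `^ (2 - 2 * beta) * b `^ beta).
Proof.
move=> a_ge0 pa_ge pb_le.
have min_le : Num.min pa pb <= M * b `^ beta by rewrite ge_min pb_le orbT.
apply: le_trans (ler_wpM2l (sqr_ge0 _) min_le) _.
rewrite (exprSr M 2) [leRHS]mulrACA ler_wpM2r ?mulr_ge0 ?powR_ge0 ?(ltW M_gt0) //.
exact: scale_free_sq_ratio_le.
Qed.

Lemma sq_ratio_min_le a b pa pb : 1 / 2 <= beta <= 1 -> 1 <= M ->
  0 <= a -> 0 <= b -> M^-1 * a `^ beta <= pa -> pb <= M * b `^ beta ->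
  (a / pa) ^+ 2 * Num.min pa pb <= M ^+ 3 * (a * b `^ (1 - beta)).
Proof.
move=> /andP[beta_ge beta_le1] M_ge1 a_ge0 b_ge0 pa_ge pb_le.
(* For a <= b bound the minimum by pa; for b < a use the previous lemma and
   b^(2 beta - 1) <= a^(2 beta - 1). *)
have [a_le_b|b_lt_a] := leP a b.
  have [->|a_neq0] := eqVneq a 0.
    by rewrite mul0r expr0n /= !mul0r mulr0.
  have a_gt0 : 0 < a by rewrite lt_neqAle eq_sym a_neq0.
  have pa_gt0 : 0 < pa.
    by apply: lt_le_trans pa_ge; rewrite mulr_gt0 ?invr_gt0 ?powR_gt0.
  have min_le : Num.min pa pb <= pa by rewrite ge_min lexx.
  apply: le_trans (ler_wpM2l (sqr_ge0 _) min_le) _.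
  rewrite expr2 -mulrA divfK ?gt_eqF // mulrC [leRHS]mulrCA ler_wpM2l //.
  apply: le_trans (scale_free_ratio_le a_ge0 pa_ge) _.
  apply: ler_pM; rewrite ?powR_ge0 ?(ltW M_gt0) ?ler_eXnr //.
  by apply: (ge0_ler_powR _); rewrite ?nnegrE ?subr_ge0.
apply: le_trans (sq_ratio_min_le_powR a_ge0 pa_ge pb_le) _.
rewrite ler_wpM2l ?exprn_ge0 ?(ltW M_gt0) //.
have [->|b_neq0] := eqVneq b 0.
  rewrite powR0 ?mulr0 ?mulr_ge0 ?powR_ge0 // gt_eqF //.
  exact: lt_le_trans beta_ge.
have b_gt0 : 0 < b by rewrite lt_neqAle eq_sym b_neq0.
have a_gt0 : 0 < a by apply: le_lt_trans b_lt_a.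
have beta2_ge0 : 0 <= 2 * beta - 1 by lra.
have -> : b `^ beta = b `^ (2 * beta - 1) * b `^ (1 - beta).
  by rewrite -gt0_powRD // (_ : 2 * beta - 1 + (1 - beta) = beta) //; ring.
rewrite mulrA ler_wpM2r ?powR_ge0 //.
apply: (le_trans (y := a `^ (2 - 2 * beta) * a `^ (2 * beta - 1))).
  rewrite ler_wpM2l ?powR_ge0 //.
  by apply: (ge0_ler_powR beta2_ge0); rewrite ?nnegrE // ltW.
rewrite -gt0_powRD // (_ : 2 - 2 * beta + (2 * beta - 1) = 1); last by ring.
by rewrite powRr1 // ltW.
Qed.

Lemma sum_sq_ratio_min_le n (W p : 'I_n -> R) (A : {pred 'I_n}) :
  1 / 2 <= beta <= 1 -> 1 <= M -> (forall i, 0 <= W i) ->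
  (forall i, M^-1 * W i `^ beta <= p i /\ p i <= M * W i `^ beta) ->
  \sum_(i < n) \sum_(j < n) (W i / p i) ^+ 2 * Num.min (p i) (p j) <=
  M ^+ 3 * ((\sum_(i < n) W i) * (\sum_(j in A) W j `^ (1 - beta)) +
            (\sum_(i < n) W i `^ (2 - 2 * beta)) *
              (\sum_(j | j \notin A) W j `^ beta)).
Proof.
move=> beta01 M_ge1 W_ge0 Wp.
rewrite !big_distrl /= mulrDr !mulr_sumr -big_split /=.
apply: ler_sum => i _; rewrite (bigID [in A]) /= !mulr_sumr.
have [pi_ge _] := Wp i.
apply: lerD; apply: ler_sum => j _; have [_ pj_le] := Wp j.
- by rewrite sq_ratio_min_le.
- by rewrite sq_ratio_min_le_powR.
Qed.

End scale_free_pair.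

Section localized_weights.
Variables (R : realType) (dd n : nat) (w : 'rV[R]_dd -> 'I_n -> R).
Variables (x : 'rV[R]_dd) (tau gamma : R).
Hypotheses (w_ge0 : forall i, 0 <= w x i) (mu_gt0 : 0 < mu_of w x).
Hypotheses (mu_le_tau : mu_of w x <= tau) (gamma_ge0 : 0 <= gamma).
Hypothesis x_localized : localized w x tau gamma.

Local Notation mu := (mu_of w x).
Local Notation B := (Bset w x tau).

Lemma n_gt0 : 0 < n%:R :> R.
Proof.
rewrite ltr0n lt0n; apply: contraTneq mu_gt0 => n0.
by rewrite /mu_of; move: (w x); rewrite n0 => f; rewrite invr0 mul0r ltxx.
Qed.

Lemma sum_weightsE : \sum_(i < n) w x i = n%:R * mu.
Proof. by rewrite /mu_of mulrA mulfV ?mul1r // gt_eqF // n_gt0. Qed.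

Lemma sum_notB_le : \sum_(i | i \notin B) w x i <= gamma * (n%:R * mu).
Proof.
have := x_localized; rewrite /localized -sum_weightsE (bigID (mem B)) /=.
lra.
Qed.

Lemma sum_B_powR_le (r : R) : 0 <= r ->
  \sum_(i in B) w x i `^ (1 - r) <= n%:R * mu * (tau `^ r * mu `^ (- r)).
Proof.
move=> r_ge0; have tau_gt0 : 0 < tau by apply: lt_le_trans mu_le_tau.
apply: (le_trans (y := \sum_(i in B) w x i * (tau `^ r * mu `^ (- r)))).
  by apply: ler_sum => i; rewrite inE => /powR1B_le; apply.
rewrite -mulr_suml ler_wpM2r ?mulr_ge0 ?powR_ge0 //.
by rewrite -sum_weightsE [leRHS](bigID (mem B)) /= lerDl sumr_ge0.
Qed.

Lemma sum_notB_powR_le (q : R) : 0 <= q <= 1 ->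
  \sum_(i | i \notin B) w x i `^ q <= n%:R * (gamma * mu) `^ q.
Proof.
move=> q01; apply: le_trans (sum_powR_le_mean [predC B] w_ge0 q01) _.
rewrite card_ord ler_wpM2l ?ler0n //; have [q_ge0 _] := andP q01.
apply: (ge0_ler_powR q_ge0); rewrite ?nnegrE.
- by rewrite divr_ge0 ?ler0n ?sumr_ge0.
- by rewrite mulr_ge0 // ltW.
- by rewrite ler_pdivrMr ?n_gt0 // -mulrA (mulrC mu) sum_notB_le.
Qed.

Variable beta : R.
Hypothesis beta01 : 1 / 2 <= beta <= 1.

Lemma sum_powR22_le : \sum_(i < n) w x i `^ (2 - 2 * beta) <=
  n%:R * mu * (tau `^ (2 * beta - 1) * mu `^ (- (2 * beta - 1))) +
  n%:R * (gamma * mu) `^ (2 - 2 * beta).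
Proof.
have [beta_ge beta_le1] := andP beta01.
rewrite (bigID (mem B)) /= lerD //; last by rewrite sum_notB_powR_le //; lra.
rewrite (_ : 2 - 2 * beta = 1 - (2 * beta - 1)); last by ring.
by rewrite sum_B_powR_le //; lra.
Qed.

Variables (p : 'I_n -> R) (M : R).
Hypothesis M_ge1 : 1 <= M.
Hypothesis p_scale_free :
  forall i, M^-1 * w x i `^ beta <= p i /\ p i <= M * w x i `^ beta.

Lemma localized_sum_sq_ratio_min_le :
  (\sum_(i < n) \sum_(j < n) (w x i / p i) ^+ 2 * Num.min (p i) (p j)) / n%:R ^+ 2 <=
  mu ^+ 2 * M ^+ 3 *
    (2 * tau `^ beta + gamma `^ (2 - beta) + tau `^ (2 * beta - 1) * gamma `^ beta)
    * mu `^ (- beta).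
Proof.
have [beta_ge beta_le1] := andP beta01.
have M_gt0 : 0 < M by apply: lt_le_trans M_ge1.
have mu_ge0 := ltW mu_gt0.
pose K r := tau `^ r * mu `^ (- r).
pose G r := (gamma * mu) `^ r.
apply: (le_trans (y := M ^+ 3 * (n%:R * mu * (n%:R * mu * K beta) +
    (n%:R * mu * K (2 * beta - 1) + n%:R * G (2 - 2 * beta)) * (n%:R * G beta))
    / n%:R ^+ 2)).
  rewrite ler_wpM2r ?invr_ge0 ?exprn_ge0 ?ler0n //.
  apply: le_trans (sum_sq_ratio_min_le M_gt0 B beta01 M_ge1 w_ge0 p_scale_free) _.
  have nmu_ge0 : 0 <= n%:R * mu by rewrite mulr_ge0 ?ler0n.
  rewrite ler_wpM2l ?exprn_ge0 ?(ltW M_gt0) // sum_weightsE.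
  apply: lerD; first by rewrite ler_wpM2l // /K sum_B_powR_le //; lra.
  apply: ler_pM; rewrite ?sumr_ge0 ?sum_powR22_le // => *; rewrite ?powR_ge0 //.
  by rewrite /G sum_notB_powR_le //; lra.
rewrite (_ : _ / _ = M ^+ 3 * (mu ^+ 2 * K beta +
    (mu * K (2 * beta - 1) + G (2 - 2 * beta)) * G beta)); last first.
  by field; rewrite gt_eqF ?n_gt0.
rewrite /K /G second_moment_termsE //; set S := _ + _ + _.
rewrite (_ : _ * (_ * S * _) = mu ^+ 2 * M ^+ 3 * S * mu `^ (- beta)); last by ring.
have c_ge0 : 0 <= mu ^+ 2 * M ^+ 3.
  by rewrite mulr_ge0 ?sqr_ge0 ?exprn_ge0 ?(ltW M_gt0).
by rewrite ler_wpM2r ?powR_ge0 // ler_wpM2l // !lerD2r ler_peMl ?powR_ge0 ?ler1n.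
Qed.

End localized_weights.

Section integral_indic_sum.
Local Open Scope ereal_scope.
Context d (T : measurableType d) (R : realType) (mu : {measure set T -> \bar R}).

Lemma ge0_integral_sum_indic (I : finType) (c : I -> R) (A : I -> set T) :
  (forall i, (0 <= c i)%R) -> (forall i, measurable (A i)) ->
  \int[mu]_t (\sum_i c i * \1_(A i) t)%:E = \sum_i (c i)%:E * mu (A i).
Proof.
move=> c_ge0 mA; under eq_integral do rewrite -sumEFin.
rewrite ge0_integral_sum //; last 2 first.
- by move=> i; apply/measurable_EFinP/measurable_funM => //; exact: measurable_indic.
- by move=> i t _; rewrite lee_fin mulr_ge0.
apply: eq_bigr => i _; under eq_integral do rewrite EFinM.
rewrite ge0_integralZl_EFin ?integral_indic ?setIT //.
by apply/measurable_EFinP; exact: measurable_indic.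
Qed.

End integral_indic_sum.

Lemma fine_measureI_le_min d (T : measurableType d) (R : realType)
    (mu : {finite_measure set T -> \bar R}) (A B : set T) :
  measurable A -> measurable B ->
  fine (mu (A `&` B)) <= Num.min (fine (mu A)) (fine (mu B)).
Proof.
move=> mA mB; have mAB := measurableI _ _ mA mB.
by rewrite le_min !fine_le ?fin_num_measure ?measureIl ?measureIr.
Qed.

Section hashing_estimator.
Variables (R : realType) (dd n : nat) (U : eqType).
Variables (d0 : measure_display) (T : measurableType d0) (P : probability T R).
Variables (hash : T -> 'rV[R]_dd -> U) (xs : 'I_n -> 'rV[R]_dd).
Variables (w : 'rV[R]_dd -> 'I_n -> R) (x : 'rV[R]_dd).

Lemma Zsq_given_hE (p : 'rV[R]_dd -> 'I_n -> R) (h : 'rV[R]_dd -> U) :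
  Zsq_given_h w p h xs x =
  (\sum_(i in Hset h xs x) \sum_(j in Hset h xs x) (w x i / p x i) ^+ 2) / n%:R ^+ 2.
Proof.
rewrite /Zsq_given_h; set H := Hset h xs x.
have [/card0_eq H0|H_neq0] := eqVneq #|H| 0%N.
  by rewrite expr0n big_pred0 ?mul0r.
have n_neq0 : n != 0%N.
  by move: (max_card H) H_neq0; rewrite card_ord -!lt0n => /(leq_trans _); apply.
rewrite mulr_suml; apply: eq_bigr => i _.
(* Naming [c] hides [p x i] from [field], which would otherwise require it to
   be nonzero. *)
rewrite sumr_const -mulr_natr /Zval -/H; set c := w x i / p x i.
by field; rewrite !pnatr_eq0 H_neq0 n_neq0.
Qed.

Lemma mem_collide_event om i :
  (om \in collide_event hash xs x i) = (i \in Hset (hash om) xs x).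
Proof. by rewrite inE; apply/idP/idP => [/set_mem|/mem_set]. Qed.

Lemma sum_Hset_indic (F : 'I_n -> R) om :
  \sum_(i in Hset (hash om) xs x) F i =
  \sum_i F i * \1_(collide_event hash xs x i) om.
Proof.
rewrite big_mkcond; apply: eq_bigr => i _.
by rewrite indicE mem_collide_event; case: (i \in _); rewrite ?mulr1 ?mulr0.
Qed.

Lemma Zsq_given_h_indicE (p : 'rV[R]_dd -> 'I_n -> R) om :
  Zsq_given_h w p (hash om) xs x =
  \sum_(ij : 'I_n * 'I_n) (w x ij.1 / p x ij.1) ^+ 2 / n%:R ^+ 2 *
    \1_(collide_event hash xs x ij.1 `&` collide_event hash xs x ij.2) om.
Proof.
rewrite Zsq_given_hE sum_Hset_indic mulr_suml.
under eq_bigr => i _ do rewrite sum_Hset_indic !mulr_suml.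
rewrite pair_big; apply: eq_bigr => -[i j] _ /=.
by rewrite indicI /=; ring.
Qed.

Lemma HBE_second_moment_le :
  (forall i, measurable (collide_event hash xs x i)) ->
  (HBE_second_moment P hash w xs x <=
   ((\sum_(i < n) \sum_(j < n) (w x i / coll_prob P hash xs x i) ^+ 2 *
      Num.min (coll_prob P hash xs x i) (coll_prob P hash xs x j)) / n%:R ^+ 2)%:E)%E.
Proof.
move=> mE; rewrite /HBE_second_moment.
under eq_integral do rewrite Zsq_given_h_indicE.
rewrite ge0_integral_sum_indic => [||ij]; last exact: measurableI.
- rewrite pair_big mulr_suml -sumEFin lee_sum // => -[i j] _ /=.
  have mEij := measurableI _ _ (mE i) (mE j).
  rewrite -[P _]fineK ?fin_num_measure // -EFinM lee_fin mulrAC.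
  rewrite ler_wpM2r ?invr_ge0 ?exprn_ge0 ?ler0n //.
  by rewrite ler_wpM2l ?sqr_ge0 ?fine_measureI_le_min.
- by move=> ij; rewrite divr_ge0 ?sqr_ge0 ?exprn_ge0 ?ler0n.
Qed.

End hashing_estimator.

Theorem theorem5 (R : realType) (dd n : nat) (U : eqType)
  (d0 : measure_display) (T : measurableType d0) (P : probability T R)
  (hash : T -> 'rV[R]_dd -> U) (xs : 'I_n -> 'rV[R]_dd)
  (w : 'rV[R]_dd -> 'I_n -> R) (beta M tau gamma : R) (x : 'rV[R]_dd) :
  (forall q i, measurable (collide_event hash xs q i)) ->
  (forall q i, 0 <= w q i) ->
  1 / 2 <= beta -> beta <= 1 -> 1 <= M ->
  scale_free beta M w (coll_prob P hash xs) ->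
  0 < mu_of w x ->
  mu_of w x <= tau -> tau <= 1 ->
  0 <= gamma -> gamma <= 1 ->
  localized w x tau gamma ->
  (HBE_second_moment P hash w xs x <=
   ((mu_of w x) ^+ 2 * M ^+ 3 *
     (2 * tau `^ beta + gamma `^ (2 - beta) + tau `^ (2 * beta - 1) * gamma `^ beta)
     * (mu_of w x) `^ (- beta))%:E)%E.
Proof.
move=> mE w_ge0 beta_ge beta_le1 M_ge1 hsf mu_gt0 mu_le_tau _ gamma_ge0 _ hloc.
apply: le_trans (HBE_second_moment_le P w (mE x)) _; rewrite lee_fin.
apply: localized_sum_sq_ratio_min_le => //.
by rewrite beta_ge.
Qed.
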